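(* Let $\mathcal H$ be an infinite-dimensional complex Hilbert space. Then the generalized effect algebra $(\mathcal V_f(\mathcal H);\oplus,o)$ is monotone Dedekind downwards $\sigma$-complete.
   Context: Bilinear forms $t$ on $\mathcal H$ are sesquilinear maps $D(t)\times D(t)\to\mathbb C$ on a dense linear subspace $D(t)$ (linear in the first argument); $t$ is positive if $t(x,x)\ge0$ on $D(t)$, bounded if $\sup\{t(x,x)\mid x\in D(t),\|x\|=1\}<\infty$. The sum $t+s$ has domain $D(t)\cap D(s)$. $o$ is the zero form on $\mathcal H$. $\mathcal V_f(\mathcal H)$ is the set of positive bilinear forms with dense domain such that $D(t)=\mathcal H$ whenever $t$ is bounded; $t\oplus s$ is defined iff $t$ or $s$ is bounded or $D(t)=D(s)$, and then $t\oplus s=t+s$; this is a generalized effect algebra with induced order $t\le s$ iff $t\oplus r=s$ for some $r\in\mathcal V_f(\mathcal H)$. A generalized effect algebra is monotone Dedekind downwards $\sigma$-complete if every sequence $x_1\ge x_2\ge\cdots$ (in the induced order) has an infimum in it. *)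

From mathcomp Require Import all_boot all_algebra.
From mathcomp Require Import complex.
From mathcomp Require Import reals.
Set Implicit Arguments. Unset Strict Implicit. Unset Printing Implicit Defensive.
Import GRing.Theory Num.Theory.
Local Open Scope ring_scope.
Local Open Scope complex_scope.

(* Complex Hilbert space: an lmodType over C = R[i] (R : realType) with an
   inner product ip (linear in the first argument), complete for the induced
   norm. *)
Section Forms.
Variables (R : realType) (H : lmodType R[i]) (ip : H -> H -> R[i]).

Definition normH (x : H) : R[i] := sqrtC (ip x x).

Definition is_inner_product : Prop :=
  [/\ forall (a : R[i]) (x y z : H), ip (a *: x + y) z = a * ip x z + ip y z,
      forall x y : H, ip y x = (ip x y)^*%R,
      forall x : H, 0 <= ip x x
    & forall x : H, ip x x = 0 -> x = 0].

Definition hilbert_complete : Prop :=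
  forall u : nat -> H,
    (forall eps : R, 0 < eps -> exists N : nat, forall m n : nat,
        (N <= m)%N -> (N <= n)%N -> normH (u m - u n) < eps%:C) ->
    exists x : H, forall eps : R, 0 < eps -> exists N : nat, forall n : nat,
        (N <= n)%N -> normH (u n - x) < eps%:C.

Definition infinite_dimensional : Prop :=
  forall n : nat, exists v : 'I_n -> H, forall c : 'I_n -> R[i],
    \sum_(i < n) c i *: v i = 0 -> forall i, c i = 0.

(* A (candidate) bilinear form: a domain D(t) and the values of t; only the
   values on D(t) x D(t) are meaningful (see form_eq). *)
Record form := Form { dom : H -> Prop; fval : H -> H -> R[i] }.

Definition is_subspace (D : H -> Prop) : Prop :=
  D 0 /\ forall (a : R[i]) x y, D x -> D y -> D (a *: x + y).

Definition dense (D : H -> Prop) : Prop :=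
  forall (x : H) (eps : R), 0 < eps -> exists y, D y /\ normH (x - y) < eps%:C.

Definition is_form (t : form) : Prop :=
  [/\ is_subspace (dom t), dense (dom t),
      (forall (a : R[i]) x y z, dom t x -> dom t y -> dom t z ->
         fval t (a *: x + y) z = a * fval t x z + fval t y z)
    & (forall (a : R[i]) x y z, dom t x -> dom t y -> dom t z ->
         fval t x (a *: y + z) = (a^*)%R * fval t x y + fval t x z)].

Definition form_eq (t s : form) : Prop :=
  (forall x, dom t x <-> dom s x) /\
  (forall x y, dom t x -> dom t y -> fval t x y = fval s x y).

Definition positive_form (t : form) : Prop :=
  forall x, dom t x -> 0 <= fval t x x.

Definition bounded_form (t : form) : Prop :=
  exists M : R, forall x, dom t x -> ip x x = 1 -> fval t x x <= M%:C.

Definition zero_form : form := Form (fun _ => True) (fun _ _ => 0).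

Definition Vf (t : form) : Prop :=
  [/\ is_form t, positive_form t & (bounded_form t -> forall x, dom t x)].

Definition form_add (t s : form) : form :=
  Form (fun x => dom t x /\ dom s x) (fun x y => fval t x y + fval s x y).

Definition oplus_defined (t s : form) : Prop :=
  [\/ bounded_form t, bounded_form s | forall x, dom t x <-> dom s x].

Definition form_le (t s : form) : Prop :=
  exists r : form, [/\ Vf r, oplus_defined t r & form_eq (form_add t r) s].

Definition is_inf_Vf (u : nat -> form) (t0 : form) : Prop :=
  [/\ Vf t0, (forall n, form_le t0 (u n))
    & forall s, Vf s -> (forall n, form_le s (u n)) -> form_le s t0].

Definition monotone_downwards_sigma_complete : Prop :=
  forall u : nat -> form, (forall n, Vf (u n)) ->
    (forall n, form_le (u n.+1) (u n)) -> exists t0, is_inf_Vf u t0.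

End Forms.

From Pilot Require Import Defs.
From mathcomp Require Import all_boot all_order all_algebra.
From mathcomp Require Import complex.
From mathcomp Require Import reals classical_sets boolp.
From mathcomp Require Import ring lra.
Set Implicit Arguments. Unset Strict Implicit. Unset Printing Implicit Defensive.
Import Order.TTheory GRing.Theory Num.Theory Normc.
Local Open Scope ring_scope.
Local Open Scope complex_scope.
Local Open Scope classical_set_scope.

(* In a decreasing sequence u_0 >= u_1 >= ... of V_f(H) the domains are
   eventually constant: once some u_k is bounded, all later terms are bounded
   with domain H, and an unbounded u_(n+1) <= u_n has the same domain as u_n.
   On the common domain D the quadratic forms u_n[x] decrease to a limit, which
   polarizes to a positive sesquilinear form t on D.  If t is unbounded it is
   the infimum; if it is bounded, the infimum is its continuous extension to H,
   which by density of D dominates every bounded lower bound of the sequence. *)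

Section Approximation.
Variable R : realType.
Implicit Types (k e : R) (z w : R[i]).

Lemma eq0_approx k : (forall e, 0 < e -> `|k| < e) -> k = 0.
Proof.
move=> small; apply/normr0_eq0/le_anti; rewrite normr_ge0 andbT.
by apply/ler_addgt0Pr => e /small /ltW; rewrite add0r.
Qed.

Lemma common_radius (K d1 d2 d3 : R) : 1 <= K -> 0 < d1 -> 0 < d2 -> 0 < d3 ->
  exists2 d, 0 < d & [/\ K * d <= d1, d <= d1, d <= d2 & d <= d3].
Proof.
move=> K1 d10 d20 d30; have K0 : 0 < K := lt_le_trans ltr01 K1.
set dm := Num.min d1 (Num.min d2 d3).
have [dm1 dm2 dm3] : [/\ dm <= d1, dm <= d2 & dm <= d3].
  by rewrite /dm !ge_min !lexx !orbT.
have d_dm : dm / K <= dm by rewrite ler_pdivrMr // ler_peMr // ltW // !lt_min d10 d20 d30.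
exists (dm / K); first by rewrite divr_gt0 // !lt_min d10 d20 d30.
rewrite mulrC divfK ?gt_eqF //; split => //; exact: le_trans d_dm _.
Qed.

Lemma nonincreasing_inf_approx (u : nat -> R) (l : R) :
  (forall n m, (n <= m)%N -> u m <= u n) -> (forall n, l <= u n) ->
  forall e, 0 < e -> exists N, forall n, (N <= n)%N -> `|u n - inf (range u)| < e.
Proof.
move=> u_dec u_lb e e0.
have lbu : lbound (range u) l by move=> _ [n _ <-].
have inf_u : has_inf (range u) by split; [exists (u 0%N), 0%N | exists l].
have [_ [N _ <-] uN] := inf_adherent e0 inf_u.
exists N => n Nn; have inf_le : inf (range u) <= u n.
  by apply: (ge_inf (ex_intro _ _ lbu)); exists n.
have := u_dec _ _ Nn; rewrite ltr_norml; lra.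
Qed.

(* [lecR] and friends are stated over an rcfType; these restatements let
   [rewrite] match the instance path that [_%:C] takes over a realType. *)
Lemma lec_real k k' : (k%:C <= k'%:C) = (k <= k').
Proof. exact: lecR. Qed.

Lemma lec0_real k : (0 <= k%:C) = (0 <= k).
Proof. exact: ler0c. Qed.

Lemma ReD z w : complex.Re (z + w) = complex.Re z + complex.Re w.
Proof. by case: z; case: w. Qed.

Lemma Re_le z w : z <= w -> complex.Re z <= complex.Re w.
Proof. by rewrite lecE => /andP[]. Qed.

Lemma normcR k : normc k%:C = `|k|.
Proof. by rewrite /normc /= expr0n addr0 sqrtr_sqr. Qed.

Lemma normci : normc ('i : R[i]) = 1.
Proof. by rewrite /normc /= expr0n add0r expr1n sqrtr1. Qed.

Lemma normc_ge0 z : 0 <= normc z.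
Proof. by case: z => a b; rewrite /normc sqrtr_ge0. Qed.

Lemma normc_Re z : `|complex.Re z| <= normc z.
Proof.
case: z => a b; rewrite /normc /= -sqrtr_sqr ler_wsqrtr //.
by rewrite lerDl sqr_ge0.
Qed.

Lemma normc_Im z : `|complex.Im z| <= normc z.
Proof.
case: z => a b; rewrite /normc /= -sqrtr_sqr ler_wsqrtr //.
by rewrite lerDr sqr_ge0.
Qed.

Lemma normc_realB k z : `|k - complex.Re z| <= normc (k%:C - z).
Proof. by case: z => a b; apply: le_trans (normc_Re (k%:C - (a +i* b))). Qed.

Lemma normcBC z w : normc (z - w) = normc (w - z).
Proof. by rewrite -normcN opprB. Qed.

Lemma normc_div4 z : normc (z / 4) = normc z / 4.
Proof.
rewrite normcM normcV -(rmorph_nat (real_complex R)) normcR.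
by rewrite ger0_norm.
Qed.

Lemma eq_approx z w : (forall e, 0 < e -> normc (z - w) < e) -> z = w.
Proof.
move=> close; apply/eqP; rewrite -subr_eq0; apply/eqP/eq0_normc.
by apply: eq0_approx => e /close; rewrite ger0_norm ?normc_ge0.
Qed.

Lemma ge0_approx z :
  (forall e, 0 < e -> exists w, 0 <= w /\ normc (z - w) < e) -> 0 <= z.
Proof.
move=> close; rewrite lecE /=; apply/andP; split.
  apply/eqP/eq0_approx => e /close [w [w0 zw]].
  apply: le_lt_trans zw; rewrite -[X in `|X|]subr0 -(ger0_Im w0).
  by rewrite -raddfB normc_Im.
apply/ler_addgt0Pl => e /close [w [w0 zw]].
have := le_lt_trans (normc_Re _) zw; rewrite raddfB /= ltr_norml.
have := w0; rewrite lecE => /andP[_]; lra.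
Qed.

Lemma le_approx z c :
  (forall e, 0 < e -> exists w, w <= c /\ normc (z - w) < e) -> z <= c.
Proof.
move=> close; rewrite -subr_ge0; apply: ge0_approx => e /close [w [wc zw]].
exists (c - w); split; first by rewrite subr_ge0.
by rewrite (_ : c - z - (c - w) = - (z - w)) ?normcN //; ring.
Qed.

Lemma affine_approx X Y Z a :
  (forall e, 0 < e -> exists y z,
     [/\ normc (X - (a * y + z)) < e, normc (Y - y) < e & normc (Z - z) < e]) ->
  X = a * Y + Z.
Proof.
move=> close; apply: eq_approx => e e0.
have K0 : 0 < normc a + 2 by have := normc_ge0 a; lra.
have [y [z [hX hY hZ]]] := close _ (divr_gt0 e0 K0).
have -> : X - (a * Y + Z) = (X - (a * y + z)) + a * (y - Y) + (z - Z) by ring.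
have hY' : normc a * normc (y - Y) <= normc a * (e / (normc a + 2)).
  by rewrite normcBC ler_wpM2l ?normc_ge0 ?ltW.
have split_e : e = e / (normc a + 2) + normc a * (e / (normc a + 2)) + e / (normc a + 2).
  by field; rewrite gt_eqF.
rewrite split_e; apply: le_lt_trans (le_normcD _ _) _.
rewrite normcBC in hZ; apply: ltrD hZ.
by apply: le_lt_trans (le_normcD _ _) _; rewrite normcM; apply: ltr_leD hX hY'.
Qed.

End Approximation.

Section Sesquilinear.
Variables (R : realType) (H : lmodType R[i]).
Implicit Types (D : H -> Prop) (x y z : H).

Definition is_sesquilinear D (f : H -> H -> R[i]) :=
 [/\ is_subspace D,
   (forall (a : R[i]) x y z, D x -> D y -> D z -> f (a *: x + y) z = a * f x z + f y z)
 & (forall (a : R[i]) x y z, D x -> D y -> D z ->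
      f x (a *: y + z) = (a^*)%R * f x y + f x z)].

Definition positive_on D (f : H -> H -> R[i]) := forall x, D x -> 0 <= f x x.

Definition qf (f : H -> H -> R[i]) x : R := complex.Re (f x x).

Definition polar (q : H -> R[i]) x y : R[i] :=
  (q (x + y) - q (x - y) + 'i * (q (x + 'i *: y) - q (x - 'i *: y))) / 4.

Lemma polar_approx (q q' : H -> R[i]) a b x y (e : R) :
  normc (q (a + b) - q' (x + y)) < e -> normc (q (a - b) - q' (x - y)) < e ->
  normc (q (a + 'i *: b) - q' (x + 'i *: y)) < e ->
  normc (q (a - 'i *: b) - q' (x - 'i *: y)) < e ->
  normc (polar q a b - polar q' x y) < e.
Proof.
set d1 := q (a + b) - _; set d2 := q (a - b) - _.
set d3 := q (a + 'i *: b) - _; set d4 := q (a - 'i *: b) - _ => h1 h2 h3 h4.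
have -> : polar q a b - polar q' x y = (d1 - d2 + 'i * (d3 - d4)) / 4.
  by rewrite /polar /d1 /d2 /d3 /d4; ring.
rewrite normc_div4 ltr_pdivrMr //.
apply: le_lt_trans (le_normcD _ _) _; rewrite normcM normci mul1r.
have sub_le (u v : R[i]) : normc (u - v) <= normc u + normc v.
  by apply: le_trans (le_normcD _ _) _; rewrite normcN.
have := sub_le d1 d2; have := sub_le d3 d4; lra.
Qed.

Section Subspace.
Variable D : H -> Prop.
Hypothesis hD : is_subspace D.

Lemma subspace0 : D 0. Proof. by case: hD. Qed.

Lemma subspaceZD a x y : D x -> D y -> D (a *: x + y).
Proof. by case: hD => _; apply. Qed.

Lemma subspaceD x y : D x -> D y -> D (x + y).
Proof. by move=> Dx Dy; have := subspaceZD 1 Dx Dy; rewrite scale1r. Qed.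

Lemma subspaceZ a x : D x -> D (a *: x).
Proof. by move=> Dx; have := subspaceZD a Dx subspace0; rewrite addr0. Qed.

Lemma subspaceB x y : D x -> D y -> D (x - y).
Proof. by move=> Dx Dy; rewrite -scaleN1r addrC; apply: subspaceZD. Qed.

End Subspace.

Section SesquilinearTheory.
Variables (D : H -> Prop) (f : H -> H -> R[i]).
Hypothesis hf : is_sesquilinear D f.

Let hD : is_subspace D. Proof. by case: hf. Qed.
Let D0 := subspace0 hD.

Lemma sesqZDl a x y z : D x -> D y -> D z -> f (a *: x + y) z = a * f x z + f y z.
Proof. by case: hf => _ lin _; apply: lin. Qed.

Lemma sesqZDr a x y z : D x -> D y -> D z -> f x (a *: y + z) = (a^*)%R * f x y + f x z.
Proof. by case: hf => _ _ lin; apply: lin. Qed.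

Lemma sesq0l z : D z -> f 0 z = 0.
Proof.
by move=> Dz; have := sesqZDl (-1) D0 D0 Dz; rewrite scaler0 addr0 mulN1r addNr.
Qed.

Lemma sesq0r z : D z -> f z 0 = 0.
Proof.
move=> Dz; have := sesqZDr (-1) Dz D0 D0.
by rewrite scaler0 addr0 rmorphN rmorph1 mulN1r addNr.
Qed.

Lemma sesqDl x y z : D x -> D y -> D z -> f (x + y) z = f x z + f y z.
Proof. by move=> Dx Dy Dz; rewrite -{1}(scale1r x) sesqZDl // mul1r. Qed.

Lemma sesqDr x y z : D x -> D y -> D z -> f x (y + z) = f x y + f x z.
Proof. by move=> Dx Dy Dz; rewrite -{1}(scale1r y) sesqZDr // rmorph1 mul1r. Qed.

Lemma sesqZl a x z : D x -> D z -> f (a *: x) z = a * f x z.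
Proof. by move=> Dx Dz; rewrite -(addr0 (a *: x)) sesqZDl // sesq0l // addr0. Qed.

Lemma sesqZr a x y : D x -> D y -> f x (a *: y) = (a^*)%R * f x y.
Proof. by move=> Dx Dy; rewrite -(addr0 (a *: y)) sesqZDr // sesq0r // addr0. Qed.

Lemma sesq_expand c x y : D x -> D y ->
  f (x + c *: y) (x + c *: y) =
  f x x + (c^*)%R * f x y + c * f y x + c * (c^*)%R * f y y.
Proof.
move=> Dx Dy; have Dcy := subspaceZ hD c Dy.
rewrite sesqDl ?sesqDr ?sesqZr ?sesqZl //; last exact: subspaceD.
ring.
Qed.

Lemma polarization x y : D x -> D y -> f x y = polar (fun z => f z z) x y.
Proof.
(* [field] cannot use [i * i = -1]: name the unit [j] as it occurs in [polar]
   (a fresh ['i] elaborates along another instance path), then abstract it. *)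
move=> Dx Dy; rewrite /polar; set j := (X in X * (_ - _)).
have j2 : j * j = -1 by rewrite -expr2 sqr_i.
have conj_j : (j^*)%R = - j by apply/eqP; rewrite eq_complex /= oppr0 !eqxx.
have conj_Nj : ((- j)^*)%R = j by apply/eqP; rewrite eq_complex /= oppr0 opprK !eqxx.
have := sesq_expand 1 Dx Dy; have := sesq_expand (-1) Dx Dy.
have := sesq_expand j Dx Dy; have := sesq_expand (- j) Dx Dy.
rewrite conj_Nj conj_j scale1r scaleN1r scaleNr rmorphN !rmorph1 => -> -> -> ->.
clear conj_j conj_Nj; move: (f x x) (f x y) (f y x) (f y y) j j2 => u v w t {}j j2.
rewrite -[LHS](_ : v + (j * j + 1) * (w - v) / 2 = v).
  by field.
by rewrite j2 addNr !mul0r addr0.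
Qed.

Hypothesis fpos : positive_on D f.

Lemma sesq_qfE x : D x -> f x x = (qf f x)%:C.
Proof. by move=> Dx; rewrite /qf RRe_real // ger0_real // fpos. Qed.

Lemma qf_ge0 x : D x -> 0 <= qf f x.
Proof. by move=> Dx; rewrite -ler0c -sesq_qfE // fpos. Qed.

Lemma qf0 : qf f 0 = 0.
Proof. by rewrite /qf sesq0l. Qed.

Lemma qfZ a x : D x -> qf f (a *: x) = normc a ^+ 2 * qf f x.
Proof.
move=> Dx; have Dax := subspaceZ hD a Dx.
rewrite /qf sesqZl // sesqZr // mulrA sesq_qfE //; clear Dax.
case: a => p r; rewrite /normc /= sqr_sqrtr ?addr_ge0 ?sqr_ge0 //.
by rewrite /qf; ring.
Qed.

Lemma qfN x : D x -> qf f (- x) = qf f x.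
Proof. by move=> Dx; rewrite -scaleN1r qfZ // normcN normc1 expr1n mul1r. Qed.

(* Stands in for Cauchy-Schwarz in the continuity estimate [qf_continuous]. *)
Lemma qfD_le mu x y : D x -> D y -> 0 < mu ->
  qf f (x + y) <= (1 + mu) * qf f x + (1 + mu^-1) * qf f y.
Proof.
move=> Dx Dy mu0; set s := complex.Re (f x y + f y x).
have sum_eq : qf f (x + y) = qf f x + s + qf f y.
  have := sesq_expand 1 Dx Dy; rewrite scale1r rmorph1 !mul1r => e.
  by rewrite /qf e /s !ReD; ring.
have diff_ge0 : 0 <= qf f y - mu * s + mu ^+ 2 * qf f x.
  have conj_mu : (((- mu)%:C)^*)%R = (- mu)%:C.
    by apply/eqP; rewrite eq_complex /= oppr0 !eqxx.
  have := qf_ge0 (subspaceD hD Dy (subspaceZ hD (- mu)%:C Dx)).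
  rewrite /qf sesq_expand // conj_mu (sesq_qfE Dx) (sesq_qfE Dy).
  by rewrite /s !ReD; move: (f y x) (f x y) => [a b] [c d] /=; nra.
have s_le : s <= mu * qf f x + mu^-1 * qf f y.
  rewrite -(ler_pM2l mu0) mulrDr mulrA mulrA mulfV ?gt_eqF // mul1r; nra.
by rewrite sum_eq; lra.
Qed.

Lemma qfD_le2 x y : D x -> D y -> qf f (x + y) <= 2 * qf f x + 2 * qf f y.
Proof. by move=> Dx Dy; have := qfD_le Dx Dy ltr01; rewrite invr1. Qed.

End SesquilinearTheory.
End Sesquilinear.

Section InnerProduct.
Variables (R : realType) (H : lmodType R[i]) (ip : H -> H -> R[i]).
Hypothesis hip : is_inner_product ip.
Implicit Types (x y a b : H) (c : R[i]).

Local Notation sqnorm := (qf ip).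

Lemma ip_sesquilinear : is_sesquilinear (fun _ => True) ip.
Proof.
case: hip => lin sym _ _; split => // c x y z _ _ _.
by rewrite sym lin rmorphD rmorphM /= -!sym.
Qed.

Lemma ip_positive : positive_on (fun _ => True) ip.
Proof. by case: hip => _ _ pos _ x _; apply: pos. Qed.

Lemma ip_sqnormE x : ip x x = (sqnorm x)%:C.
Proof. by apply: (sesq_qfE ip_positive). Qed.

Lemma sqnorm_ge0 x : 0 <= sqnorm x.
Proof. by apply: (qf_ge0 ip_positive). Qed.

Lemma sqnorm0 : sqnorm 0 = 0.
Proof. by apply: (qf0 ip_sesquilinear). Qed.

Lemma sqnorm_eq0 x : sqnorm x = 0 -> x = 0.
Proof. by case: hip => _ _ _ def sx0; apply: def; rewrite ip_sqnormE sx0. Qed.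

Lemma sqnormBC x y : sqnorm (x - y) = sqnorm (y - x).
Proof. by rewrite -(qfN ip_sesquilinear ip_positive) // opprB. Qed.

Lemma sqnormD_le x y : sqnorm (x + y) <= 2 * sqnorm x + 2 * sqnorm y.
Proof. by apply: (qfD_le2 ip_sesquilinear ip_positive). Qed.

Lemma sqnormB_le x y z : sqnorm (x - z) <= 2 * sqnorm (x - y) + 2 * sqnorm (y - z).
Proof. by have := sqnormD_le (x - y) (y - z); rewrite addrA subrK. Qed.

Lemma sqnorm_affine_le c x y a b :
  sqnorm ((c *: x + y) - (c *: a + b)) <=
    2 * normc c ^+ 2 * sqnorm (x - a) + 2 * sqnorm (y - b).
Proof.
have -> : (c *: x + y) - (c *: a + b) = c *: (x - a) + (y - b).
  by rewrite scalerBr opprD addrACA.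
have := sqnormD_le (c *: (x - a)) (y - b).
by rewrite (qfZ ip_sesquilinear ip_positive) // mulrA.
Qed.

Lemma sqnorm_affine_lt c x y a b d :
  sqnorm (x - a) < d -> sqnorm (y - b) < d ->
  sqnorm ((c *: x + y) - (c *: a + b)) < (2 * normc c ^+ 2 + 2) * d.
Proof.
move=> xa yb; apply: le_lt_trans (sqnorm_affine_le c x y a b) _.
have := sqr_ge0 (normc c); have := sqnorm_ge0 (x - a); nra.
Qed.

Lemma normH_sqnorm x : normH ip x = (Num.sqrt (sqnorm x))%:C.
Proof.
rewrite /normH ip_sqnormE -{1}(sqr_sqrtr (sqnorm_ge0 x)) rmorphXn.
by rewrite sqrCK // ler0c sqrtr_ge0.
Qed.

Lemma dense_sqnorm (D : H -> Prop) : dense ip D ->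
  forall x d, 0 < d -> exists a, D a /\ sqnorm (x - a) < d.
Proof.
move=> Ddense x d d0.
have [a [Da xa]] : exists a, D a /\ normH ip (x - a) < (Num.sqrt d)%:C.
  by apply: Ddense; rewrite sqrtr_gt0.
exists a; split => //; move: xa; rewrite normH_sqnorm ltcR.
by rewrite ltr_sqrt // sqrtr_gt0.
Qed.

Lemma dense_full : dense ip (fun _ => True).
Proof. by move=> x e e0; exists x; rewrite subrr normH_sqnorm sqnorm0 sqrtr0 ltcR. Qed.

End InnerProduct.

Section BoundedForms.
Variables (R : realType) (H : lmodType R[i]) (ip : H -> H -> R[i]).
Hypothesis hip : is_inner_product ip.
Local Notation sqnorm := (qf ip).

Lemma bounded_form_qf_le (t : Defs.form H) :
  is_sesquilinear (dom t) (fval t) -> positive_on (dom t) (fval t) ->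
  bounded_form ip t ->
  exists2 M, 0 < M & forall x, dom t x -> qf (fval t) x <= M * sqnorm x.
Proof.
move=> tsesq tpos [M boundM]; have [Dsub _ _] := tsesq.
exists (`|M| + 1) => [|x Dx]; first by rewrite ltr_pwDr.
have [nx0|nx_neq0] := eqVneq (sqnorm x) 0.
  by rewrite (sqnorm_eq0 hip nx0) (qf0 tsesq) (sqnorm0 hip) mulr0.
have nx_gt0 : 0 < sqnorm x by rewrite lt_def nx_neq0 (sqnorm_ge0 hip).
set c := (Num.sqrt (sqnorm x))^-1.
have c2 : c ^+ 2 * sqnorm x = 1 by rewrite /c exprVn sqr_sqrtr ?mulVf // ltW.
have normc_c : normc c%:C ^+ 2 = c ^+ 2 by rewrite normcR real_normK ?num_real.
have Dcx := subspaceZ Dsub c%:C Dx.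
have unit_cx : ip (c%:C *: x) (c%:C *: x) = 1.
  by rewrite (ip_sqnormE hip) (qfZ (ip_sesquilinear hip) (ip_positive hip)) // normc_c c2.
have : qf (fval t) (c%:C *: x) <= M.
  by rewrite -lec_real -(sesq_qfE tpos Dcx); apply: boundM.
rewrite (qfZ tsesq tpos) // normc_c => cx_le.
rewrite -[qf _ x]mul1r -{1}c2 mulrAC ler_wpM2r ?(sqnorm_ge0 hip) //.
by apply: le_trans cx_le _; rewrite (le_trans (ler_norm M)) // lerDl.
Qed.

Section Continuity.
Variables (D : H -> Prop) (f : H -> H -> R[i]) (M : R).
Hypotheses (fsesq : is_sesquilinear D f) (fpos : positive_on D f).
Hypotheses (M0 : 0 < M) (boundM : forall x, D x -> qf f x <= M * sqnorm x).
Let hD : is_subspace D. Proof. by case: fsesq. Qed.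

Lemma qf_local_bound x b : D b -> sqnorm (x - b) < 1 ->
  qf f b <= M * (2 * sqnorm x + 2).
Proof.
move=> Db xb; apply: le_trans (boundM Db) _; rewrite ler_wpM2l ?ltW //.
have := sqnormD_le hip x (b - x); rewrite addrC subrK (sqnormBC hip b); lra.
Qed.

Lemma qf_continuous x e : 0 < e -> exists2 d, 0 < d &
  forall a b, D a -> D b -> sqnorm (x - a) < d -> sqnorm (x - b) < d ->
    `|qf f a - qf f b| < e.
Proof.
move=> e0; set K := M * (2 * sqnorm x + 2) + 1.
have K0 : 0 < K.
  by rewrite ltr_pwDr // mulr_ge0 ?ltW //; have := sqnorm_ge0 hip x; lra.
set mu := e / (2 * K); have mu0 : 0 < mu by rewrite divr_gt0 ?mulr_gt0.
set c := 1 + mu^-1; have c0 : 0 < c by rewrite ltr_pwDr ?invr_gt0.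
set d := Num.min 1 (e / (8 * M * c)).
have d0 : 0 < d by rewrite lt_min ltr01 divr_gt0 ?mulr_gt0.
have d_le1 : d <= 1 by rewrite ge_min lexx.
have cMd : c * (4 * M * d) <= e / 2.
  have : d <= e / (8 * M * c) by rewrite ge_min lexx orbT.
  rewrite ler_pdivlMr ?mulr_gt0 // => h.
  rewrite ler_pdivlMr //; nra.
have one_sided a b : D a -> D b -> sqnorm (x - a) < d -> sqnorm (x - b) < d ->
    qf f a - qf f b < e.
  move=> Da Db xa xb.
  have qb : qf f b < K by apply: le_lt_trans (qf_local_bound Db _) _;
    [exact: lt_le_trans xb d_le1 | rewrite ltrDl].
  have qab : qf f (a - b) <= 4 * M * d.
    apply: le_trans (boundM (subspaceB hD Da Db)) _.
    rewrite [4 * M]mulrC -mulrA ler_pM2l //.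
    by have := sqnormB_le hip a x b; rewrite (sqnormBC hip a x); lra.
  have := qfD_le fsesq fpos Db (subspaceB hD Da Db) mu0.
  rewrite addrC subrK mulrDl mul1r -/c => qa.
  have muK : mu * K = e / 2 by rewrite /mu; field; rewrite gt_eqF.
  have mu_qb : mu * qf f b < mu * K by rewrite ltr_pM2l.
  have := ler_wpM2l (ltW c0) qab; lra.
exists d => // a b Da Db xa xb; rewrite ltr_norml.
by have := one_sided _ _ Db Da xb xa; have := one_sided _ _ Da Db xa xb; lra.
Qed.

End Continuity.
End BoundedForms.

Section Extension.
Variables (R : realType) (H : lmodType R[i]) (ip : H -> H -> R[i]).
Variables (D : H -> Prop) (f : H -> H -> R[i]) (M : R).
Local Notation sqnorm := (qf ip).

(* The value at [x] of the continuous extension of the quadratic form of [f]: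
   the limit superior of [qf f a] as [a] tends to [x] in [D]. *)
Definition qf_ext x := inf [set s : R | exists2 d, 0 < d &
  forall a, D a -> sqnorm (x - a) < d -> qf f a <= s].

Definition sesq_ext x y := polar (fun z => (qf_ext z)%:C) x y.

Hypothesis hip : is_inner_product ip.
Hypotheses (fsesq : is_sesquilinear D f) (fpos : positive_on D f).
Hypotheses (M0 : 0 < M) (boundM : forall x, D x -> qf f x <= M * sqnorm x).
Hypothesis Ddense : forall x d, 0 < d -> exists a, D a /\ sqnorm (x - a) < d.
Let hD : is_subspace D. Proof. by case: fsesq. Qed.

Lemma qf_ext_approx x e : 0 < e -> exists2 d, 0 < d &
  forall a, D a -> sqnorm (x - a) < d -> `|qf f a - qf_ext x| < e.
Proof.
move=> e0; have e2 : 0 < e / 2 by rewrite divr_gt0.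
have [d d0 cont] := qf_continuous hip fsesq fpos M0 boundM x e2.
exists d => // a Da xa.
set S := [set s : R | exists2 d, 0 < d &
  forall a, D a -> sqnorm (x - a) < d -> qf f a <= s].
have inS : S (qf f a + e / 2).
  exists d => // b Db xb; have := cont _ _ Db Da xb xa; rewrite ltr_norml; lra.
have lbS : lbound S (qf f a - e / 2).
  move=> s [d' d'0 le_s].
  have [b [Db xb]] : exists b, D b /\ sqnorm (x - b) < Num.min d' d.
    by apply: Ddense; rewrite lt_min d'0 d0.
  move: xb; rewrite lt_min => /andP[xb' xb].
  have := le_s _ Db xb'; have := cont _ _ Db Da xb xa; rewrite ltr_norml; lra.
have ext_le : qf_ext x <= qf f a + e / 2 by apply: (ge_inf (ex_intro _ _ lbS)).
have ext_ge : qf f a - e / 2 <= qf_ext x by apply: lb_le_inf => //; exists (qf f a + e / 2).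
by rewrite ltr_norml; lra.
Qed.

Lemma sesq_ext_approx x y e : 0 < e -> exists2 d, 0 < d &
  forall a b, D a -> D b -> sqnorm (x - a) < d -> sqnorm (y - b) < d ->
    normc (f a b - sesq_ext x y) < e.
Proof.
move=> e0.
have [d1 d10 app1] := qf_ext_approx (x + y) e0.
have [d2 d20 app2] := qf_ext_approx (x - y) e0.
have [d3 d30 app3] := qf_ext_approx (x + 'i *: y) e0.
have [d4 d40 app4] := qf_ext_approx (x - 'i *: y) e0.
set dm := Num.min (Num.min d1 d2) (Num.min d3 d4).
have dm0 : 0 < dm by rewrite !lt_min d10 d20 d30 d40.
have [dm1 dm2 dm3 dm4] : [/\ dm <= d1, dm <= d2, dm <= d3 & dm <= d4].
  by rewrite /dm !ge_min !lexx !orbT.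
exists (dm / 4) => [|a b Da Db xa yb]; first by rewrite divr_gt0.
have close c : normc c = 1 -> sqnorm ((x + c *: y) - (a + c *: b)) < dm.
  move=> c1; rewrite [x + _]addrC [a + _]addrC.
  apply: le_lt_trans (sqnorm_affine_le hip _ _ _ _ _) _; rewrite c1 expr1n mulr1.
  have := sqnormBC hip x a; lra.
have approx_at c d' (app : forall a', D a' -> sqnorm (x + c *: y - a') < d' ->
    `|qf f a' - qf_ext (x + c *: y)| < e) : normc c = 1 -> dm <= d' ->
    normc (f (a + c *: b) (a + c *: b) - (qf_ext (x + c *: y))%:C) < e.
  move=> c1 dmd; have Dab := subspaceZD hD c Db Da; rewrite addrC in Dab.
  rewrite (sesq_qfE fpos Dab) -rmorphB normcR.
  by apply: app => //; apply: lt_le_trans (close c c1) dmd.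
have normcN1 : normc (-1 : R[i]) = 1 by rewrite normcN normc1.
have normcNi : normc (- 'i : R[i]) = 1 by rewrite normcN normci.
rewrite (polarization fsesq Da Db); apply: polar_approx.
- by have := approx_at 1 d1; rewrite !scale1r; apply => //; rewrite normc1.
- by have := approx_at (-1) d2; rewrite !scaleN1r; apply.
- by apply: approx_at app3 _ dm3; exact: normci.
- by have := approx_at (- 'i) d4; rewrite !scaleNr; apply.
Qed.

Lemma sesq_ext_eq x y : D x -> D y -> sesq_ext x y = f x y.
Proof.
move=> Dx Dy; apply/esym/eq_approx => e /(sesq_ext_approx x y) [d d0 app].
by apply: app; rewrite // subrr (sqnorm0 hip).
Qed.

Lemma sesq_ext_ge0 x : 0 <= sesq_ext x x.
Proof.
apply: ge0_approx => e /(sesq_ext_approx x x) [d d0 app].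
have [a [Da xa]] := Ddense x d0.
by exists (f a a); split; [exact: fpos | rewrite normcBC; exact: app].
Qed.

Lemma sesq_ext_bound x : sqnorm x = 1 -> sesq_ext x x <= (4 * M)%:C.
Proof.
move=> x1; apply: le_approx => e /(sesq_ext_approx x x) [d d0 app].
have [a [Da xa]] : exists a, D a /\ sqnorm (x - a) < Num.min d 1.
  by apply: Ddense; rewrite lt_min d0 ltr01.
move: xa; rewrite lt_min => /andP[xa xa1].
exists (f a a); split; last by rewrite normcBC; exact: app.
rewrite (sesq_qfE fpos Da) lec_real; apply: le_trans (boundM Da) _.
rewrite [4 * M]mulrC ler_pM2l //.
by have := sqnormD_le hip x (a - x); rewrite addrC subrK (sqnormBC hip a x); lra.
Qed.

Lemma sesq_extZDl a x y z : sesq_ext (a *: x + y) z = a * sesq_ext x z + sesq_ext y z.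
Proof.
apply: affine_approx => e e0.
have [d1 d10 app1] := sesq_ext_approx (a *: x + y) z e0.
have [d2 d20 app2] := sesq_ext_approx x z e0.
have [d3 d30 app3] := sesq_ext_approx y z e0.
have K1 : 1 <= 2 * normc a ^+ 2 + 2 by have := sqr_ge0 (normc a); lra.
have [d d0 [Kd1 dd1 dd2 dd3]] := common_radius K1 d10 d20 d30.
have [x' [Dx' xx']] := Ddense x d0; have [y' [Dy' yy']] := Ddense y d0.
have [z' [Dz' zz']] := Ddense z d0.
exists (f x' z'), (f y' z'); rewrite -(sesqZDl fsesq) // !(normcBC (sesq_ext _ _)).
split; [apply: app1 | apply: app2 | apply: app3] => //;
  try exact: subspaceZD; try exact: lt_le_trans (sqnorm_affine_lt hip a xx' yy') Kd1;
  exact: lt_le_trans (_ : _ < d) _.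
Qed.

Lemma sesq_extZDr a x y z :
  sesq_ext x (a *: y + z) = (a^*)%R * sesq_ext x y + sesq_ext x z.
Proof.
apply: affine_approx => e e0.
have [d1 d10 app1] := sesq_ext_approx x (a *: y + z) e0.
have [d2 d20 app2] := sesq_ext_approx x y e0.
have [d3 d30 app3] := sesq_ext_approx x z e0.
have K1 : 1 <= 2 * normc a ^+ 2 + 2 by have := sqr_ge0 (normc a); lra.
have [d d0 [Kd1 dd1 dd2 dd3]] := common_radius K1 d10 d20 d30.
have [x' [Dx' xx']] := Ddense x d0; have [y' [Dy' yy']] := Ddense y d0.
have [z' [Dz' zz']] := Ddense z d0.
exists (f x' y'), (f x' z'); rewrite -(sesqZDr fsesq) // !(normcBC (sesq_ext _ _)).
split; [apply: app1 | apply: app2 | apply: app3] => //;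
  try exact: subspaceZD; try exact: lt_le_trans (sqnorm_affine_lt hip a yy' zz') Kd1;
  exact: lt_le_trans (_ : _ < d) _.
Qed.

Lemma sesq_ext_dominates (Dg : H -> Prop) (g : H -> H -> R[i]) (Mg : R) :
  is_sesquilinear Dg g -> positive_on Dg g -> (forall x, Dg x) ->
  0 < Mg -> (forall x, qf g x <= Mg * sqnorm x) ->
  (forall a, D a -> qf g a <= qf f a) -> forall x, qf g x <= qf sesq_ext x.
Proof.
move=> gsesq gpos gfull Mg0 boundMg gf x; apply/ler_addgt0Pr => e e0.
have e2 : 0 < e / 2 by rewrite divr_gt0.
have [d1 d10 gcont] := qf_continuous hip gsesq gpos Mg0 (fun x _ => boundMg x) x e2.
have [d2 d20 app] := sesq_ext_approx x x e2.
have [a [Da xa]] : exists a, D a /\ sqnorm (x - a) < Num.min d1 d2.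
  by apply: Ddense; rewrite lt_min d10 d20.
move: xa; rewrite lt_min => /andP[xa1 xa2].
have := gcont _ _ (gfull x) (gfull a); rewrite subrr (sqnorm0 hip) => /(_ d10 xa1).
have := app _ _ Da Da xa2 xa2.
rewrite (sesq_qfE fpos Da) => /(le_lt_trans (normc_realB _ _)).
have := gf _ Da; rewrite !ltr_norml -/(qf sesq_ext x); lra.
Qed.

End Extension.

Section VfForms.
Variables (R : realType) (H : lmodType R[i]) (ip : H -> H -> R[i]).
Hypothesis hip : is_inner_product ip.
Local Notation fm := (Defs.form H).
Local Notation Vf := (Vf ip).
Local Notation bounded := (bounded_form ip).
Implicit Types (q t u : fm).

Lemma form_sesquilinear t : is_form ip t -> is_sesquilinear (dom t) (fval t).
Proof. by case. Qed.

Lemma Vf_sesquilinear t : Vf t -> is_sesquilinear (dom t) (fval t).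
Proof. by case=> /form_sesquilinear. Qed.

Lemma Vf_positive t : Vf t -> positive_on (dom t) (fval t).
Proof. by case. Qed.

Lemma Vf_full t : Vf t -> bounded t -> forall x, dom t x.
Proof. by case. Qed.

Lemma bounded_form_le t u : positive_on (dom t) (fval t) -> positive_on (dom u) (fval u) ->
  (forall x, dom t x -> dom u x) ->
  (forall x, dom t x -> qf (fval t) x <= qf (fval u) x) -> bounded u -> bounded t.
Proof.
move=> tpos upos tu qtu [M boundM]; exists M => x Dx x1.
apply: le_trans (boundM x (tu _ Dx) x1).
by rewrite (sesq_qfE tpos Dx) (sesq_qfE upos (tu _ Dx)) lec_real qtu.
Qed.

Definition form_ext q : fm := Form (fun _ => True) (sesq_ext ip (dom q) (fval q)).

Section BoundedExtension.
Variable q : fm.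
Hypotheses (qform : is_form ip q) (qpos : positive_on (dom q) (fval q)).
Hypothesis qbounded : bounded q.
Let qsesq := form_sesquilinear qform.
Let qdense : forall x d, 0 < d -> exists a, dom q a /\ qf ip (x - a) < d.
Proof. by case: qform => _ Ddense _ _; apply: dense_sqnorm. Qed.

Lemma form_ext_Vf : Vf (form_ext q).
Proof.
have [M M0 boundM] := bounded_form_qf_le hip qsesq qpos qbounded.
split => //; last by move=> x _; exact: (sesq_ext_ge0 hip qsesq qpos M0 boundM qdense).
split => //; first exact: dense_full.
- by move=> a x y z _ _ _; exact: (sesq_extZDl hip qsesq qpos M0 boundM qdense).
- by move=> a x y z _ _ _; exact: (sesq_extZDr hip qsesq qpos M0 boundM qdense).
Qed.

Lemma form_ext_bounded : bounded (form_ext q).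
Proof.
have [M M0 boundM] := bounded_form_qf_le hip qsesq qpos qbounded.
exists (4 * M) => x _ x1; apply: (sesq_ext_bound hip qsesq qpos M0 boundM qdense).
by rewrite /qf x1.
Qed.

Lemma form_ext_eq x y : dom q x -> dom q y -> fval (form_ext q) x y = fval q x y.
Proof.
have [M M0 boundM] := bounded_form_qf_le hip qsesq qpos qbounded.
exact: (sesq_ext_eq hip qsesq qpos M0 boundM).
Qed.

End BoundedExtension.

(* The element of V_f(H) determined by a positive form: a bounded form is
   replaced by its continuous extension to all of H. *)
Definition to_Vf q := if `[< bounded q >] then form_ext q else q.

Lemma to_VfP q : is_form ip q -> positive_on (dom q) (fval q) ->
 [/\ Vf (to_Vf q), forall x, dom q x -> dom (to_Vf q) x,
     forall x y, dom q x -> dom q y -> fval (to_Vf q) x y = fval q x y &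
     (bounded q /\ to_Vf q = form_ext q) \/ (~ bounded q /\ to_Vf q = q)].
Proof.
move=> qform qpos; rewrite /to_Vf; case: asboolP => qbounded; last first.
  by split => //; right.
split => //; [exact: form_ext_Vf | exact: form_ext_eq | by left].
Qed.

End VfForms.

Section Order.
Variables (R : realType) (H : lmodType R[i]) (ip : H -> H -> R[i]).
Hypothesis hip : is_inner_product ip.
Local Notation fm := (Defs.form H).
Local Notation Vf := (Vf ip).
Local Notation bounded := (bounded_form ip).
Local Notation "t <=V u" := (form_le ip t u) (at level 70).
Implicit Types (s t u : fm).

Definition form_le_spec t u := [/\ forall x, dom u x -> dom t x,
  forall x, dom u x -> qf (fval t) x <= qf (fval u) x &
  bounded t \/ forall x, dom t x -> dom u x].

Lemma form_le_elim t u : Vf t -> Vf u -> t <=V u -> form_le_spec t u.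
Proof.
move=> tVf uVf [r [rVf tr [dom_tr val_tr]]]; split.
- by move=> x /dom_tr [].
- move=> x Dx; have [Dtx Drx] := (dom_tr x).2 Dx.
  have -> : qf (fval u) x = qf (fval t) x + qf (fval r) x by rewrite /qf -val_tr //= ReD.
  by have := qf_ge0 (Vf_positive rVf) Drx; lra.
- case: tr => [tb|rb|dom_eq]; [by left | right => x Dx; apply/dom_tr..].
  + by split => //; exact: Vf_full rVf rb x.
  + by split => //; apply/dom_eq.
Qed.

(* The difference [u - t] on [dom u], turned into an element of V_f(H),
   witnesses [t <=V u]. *)
Lemma form_le_intro t u : Vf t -> Vf u -> form_le_spec t u -> t <=V u.
Proof.
move=> tVf uVf [ut qtu tbd_or_sub].
have [[Usub Udense Ulinl Ulinr] _ _] := uVf; have [[_ _ Tlinl Tlinr] _ _] := tVf.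
set q : fm := Form (dom u) (fun x y => fval u x y - fval t x y).
have qform : is_form ip q.
  split => //= a x y z Dx Dy Dz; have := (ut _ Dx, ut _ Dy, ut _ Dz) => -[[Dx' Dy'] Dz'].
    by rewrite Ulinl // Tlinl //; ring.
  by rewrite Ulinr // Tlinr //; ring.
have qpos : positive_on (dom q) (fval q).
  move=> x /= Dx; rewrite (sesq_qfE (Vf_positive uVf) Dx).
  by rewrite (sesq_qfE (Vf_positive tVf) (ut _ Dx)) -rmorphB lec0_real subr_ge0 qtu.
have [rVf qr val_qr r_cases] := to_VfP hip qform qpos.
have dom_tr x : dom t x /\ dom (to_Vf ip q) x <-> dom u x.
  split => [[Dtx Drx]|Dx]; last by split; [exact: ut | exact: qr].
  case: r_cases => [[qb _]|[_ r_eq]]; last by rewrite r_eq in Drx.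
  case: tbd_or_sub => [tb|]; last by apply.
  apply: (Vf_full uVf); have [Mt boundMt] := tb; have [Mq boundMq] := qb.
  exists (Mt + Mq) => y Dy y1.
  have -> : fval u y y = fval t y y + fval q y y by rewrite /=; ring.
  by rewrite rmorphD; apply: lerD; [apply: boundMt => //; exact: ut | exact: boundMq].
exists (to_Vf ip q); split => //.
- case: r_cases => [[qb ->]|[_ r_eq]]; first by apply: Or32; exact: form_ext_bounded.
  case: tbd_or_sub => [tb|tu]; first exact: Or31.
  by apply: Or33 => x; rewrite r_eq; split; [exact: tu | exact: ut].
- split => // x y /dom_tr Dx /dom_tr Dy /=.
  by rewrite val_qr //=; ring.
Qed.

Lemma form_leP t u : Vf t -> Vf u -> t <=V u <-> form_le_spec t u.
Proof. by move=> tVf uVf; split; [exact: form_le_elim | exact: form_le_intro]. Qed.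

Lemma form_le_refl t : Vf t -> t <=V t.
Proof. by move=> tVf; apply/form_leP => //; split => //; right. Qed.

Lemma form_le_trans s t u : Vf s -> Vf t -> Vf u -> s <=V t -> t <=V u -> s <=V u.
Proof.
move=> sVf tVf uVf /(form_leP sVf tVf) [ts qst sb_or_sub].
move=> /(form_leP tVf uVf) [ut qtu tb_or_sub]; apply/form_leP => //; split.
- by move=> x /ut /ts.
- by move=> x Dx; apply: le_trans (qst _ (ut _ Dx)) (qtu _ Dx).
- case: (pselect (bounded s)) => [|sunb]; first by left.
  case: sb_or_sub => [//|st]; right => x Dx.
  case: tb_or_sub => [tb|]; last by apply; exact: st.
  case: sunb; apply: (bounded_form_le (Vf_positive sVf) (Vf_positive tVf) st _ tb).
  by move=> y /st; exact: qst.
Qed.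

Lemma form_le_bounded t u : Vf t -> Vf u -> t <=V u -> bounded u -> bounded t.
Proof.
move=> tVf uVf /(form_leP tVf uVf) [ut qtu _] ub.
have ufull := Vf_full uVf ub.
apply: (bounded_form_le (Vf_positive tVf) (Vf_positive uVf)) ub => x _.
  exact: ufull.
exact: qtu.
Qed.

Lemma form_le_unbounded_dom t u : Vf t -> Vf u -> t <=V u -> ~ bounded t ->
  forall x, dom t x <-> dom u x.
Proof.
move=> tVf uVf /(form_leP tVf uVf) [ut _ tb_or_sub] tunb x.
by case: tb_or_sub => // tu; split; [exact: tu | exact: ut].
Qed.

Lemma form_le_nonincreasing (w : nat -> fm) : (forall n, Vf (w n)) ->
  (forall n, w n.+1 <=V w n) -> forall n m, (n <= m)%N -> w m <=V w n.
Proof.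
move=> wVf w_decr n; elim=> [|m IH]; first by rewrite leqn0 => /eqP ->; exact: form_le_refl.
rewrite leq_eqVlt => /orP[/eqP -> | /IH]; first exact: form_le_refl.
exact: form_le_trans (w_decr m).
Qed.

End Order.

Section DecreasingLimit.
Variables (R : realType) (H : lmodType R[i]) (ip : H -> H -> R[i]).
Hypothesis hip : is_inner_product ip.
Local Notation fm := (Defs.form H).
Local Notation Vf := (Vf ip).
Local Notation bounded := (bounded_form ip).
Local Notation "t <=V u" := (form_le ip t u) (at level 70).

Variable v : nat -> fm.
Hypotheses (vVf : forall n, Vf (v n)) (v_decr : forall n, v n.+1 <=V v n).
Hypothesis v_dom : forall n x, dom (v n) x <-> dom (v 0) x.

Let D := dom (v 0).
Let inD n x : D x -> dom (v n) x := (v_dom n x).2.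

Lemma qf_nonincreasing n m x : (n <= m)%N -> D x ->
  qf (fval (v m)) x <= qf (fval (v n)) x.
Proof.
move=> + Dx; elim: m => [|m IH]; first by rewrite leqn0 => /eqP ->.
rewrite leq_eqVlt => /orP[/eqP -> // | /IH]; apply: le_trans.
by have [_ + _] := form_le_elim (vVf m.+1) (vVf m) (v_decr m); apply; exact: inD.
Qed.

Definition qf_lim x := inf (range (fun n => qf (fval (v n)) x)).

Definition lim_form : fm := Form D (polar (fun z => (qf_lim z)%:C)).

Lemma lim_form_approx x y e : D x -> D y -> 0 < e ->
  exists N, forall n, (N <= n)%N -> normc (fval (v n) x y - fval lim_form x y) < e.
Proof.
move=> Dx Dy e0; have Dsub : is_subspace D by case: (Vf_sesquilinear (vVf 0)).
have approx z : D z -> exists N, forall n, (N <= n)%N ->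
    normc (fval (v n) z z - (qf_lim z)%:C) < e.
  move=> Dz; have vpos n := Vf_positive (vVf n).
  have [N conv] := nonincreasing_inf_approx (fun n m nm => qf_nonincreasing nm Dz)
    (fun n => qf_ge0 (vpos n) (inD n Dz)) e0.
  by exists N => n /conv; rewrite (sesq_qfE (vpos n) (inD n Dz)) -rmorphB normcR.
have [N1 h1] := approx _ (subspaceD Dsub Dx Dy).
have [N2 h2] := approx _ (subspaceB Dsub Dx Dy).
have [N3 h3] := approx _ (subspaceD Dsub Dx (subspaceZ Dsub 'i Dy)).
have [N4 h4] := approx _ (subspaceB Dsub Dx (subspaceZ Dsub 'i Dy)).
exists (maxn (maxn N1 N2) (maxn N3 N4)) => n.
rewrite !geq_max => /andP[/andP[n1 n2] /andP[n3 n4]].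
rewrite (polarization (Vf_sesquilinear (vVf n)) (inD n Dx) (inD n Dy)).
by apply: polar_approx; [exact: h1 | exact: h2 | exact: h3 | exact: h4].
Qed.

Lemma lim_form_approx3 x1 y1 x2 y2 x3 y3 e :
  D x1 -> D y1 -> D x2 -> D y2 -> D x3 -> D y3 -> 0 < e -> exists n,
  [/\ normc (fval (v n) x1 y1 - fval lim_form x1 y1) < e,
      normc (fval (v n) x2 y2 - fval lim_form x2 y2) < e &
      normc (fval (v n) x3 y3 - fval lim_form x3 y3) < e].
Proof.
move=> Dx1 Dy1 Dx2 Dy2 Dx3 Dy3 e0.
have [N1 h1] := lim_form_approx Dx1 Dy1 e0; have [N2 h2] := lim_form_approx Dx2 Dy2 e0.
have [N3 h3] := lim_form_approx Dx3 Dy3 e0.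
exists (maxn N1 (maxn N2 N3)).
by split; [apply: h1 | apply: h2 | apply: h3]; rewrite !leq_max !leqnn ?orbT.
Qed.

Lemma lim_form_is_form : is_form ip lim_form.
Proof.
have [[Dsub Ddense _ _] _ _] := vVf 0%N.
split => //= a x y z Dx Dy Dz; apply: affine_approx => e e0.
  have [n [h1 h2 h3]] := lim_form_approx3 (subspaceZD Dsub a Dx Dy) Dz Dx Dz Dy Dz e0.
  exists (fval (v n) x z), (fval (v n) y z); rewrite !(normcBC (polar _ _ _)).
  by rewrite -(sesqZDl (Vf_sesquilinear (vVf n))); try exact: inD.
have [n [h1 h2 h3]] := lim_form_approx3 Dx (subspaceZD Dsub a Dy Dz) Dx Dy Dx Dz e0.
exists (fval (v n) x y), (fval (v n) x z); rewrite !(normcBC (polar _ _ _)).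
by rewrite -(sesqZDr (Vf_sesquilinear (vVf n))); try exact: inD.
Qed.

Lemma lim_form_positive : positive_on (dom lim_form) (fval lim_form).
Proof.
move=> x Dx; apply: ge0_approx => e e0; have [N conv] := lim_form_approx Dx Dx e0.
exists (fval (v N) x x); split; first exact: (Vf_positive (vVf N)) (inD N Dx).
by rewrite normcBC; exact: conv.
Qed.

Lemma lim_form_le n x : D x -> fval lim_form x x <= fval (v n) x x.
Proof.
move=> Dx; apply: le_approx => e e0; have [N conv] := lim_form_approx Dx Dx e0.
exists (fval (v (maxn N n)) x x); split; last by rewrite normcBC conv ?leq_maxl.
rewrite !(sesq_qfE (Vf_positive (vVf _)) (inD _ Dx)) lec_real.
by apply: qf_nonincreasing; rewrite ?leq_maxr.
Qed.

Lemma lim_form_ge s : Vf s -> (forall n, s <=V v n) ->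
  forall x, D x -> qf (fval s) x <= qf (fval lim_form) x.
Proof.
move=> sVf s_lb x Dx; apply/ler_addgt0Pr => e e0.
have [N conv] := lim_form_approx Dx Dx e0.
have [_ qsv _] := form_le_elim sVf (vVf N) (s_lb N).
have := le_lt_trans (normc_Re _) (conv N (leqnn N)); rewrite raddfB ltr_norml.
by have := qsv _ (inD N Dx); rewrite /qf; lra.
Qed.

Definition seq_inf := to_Vf ip lim_form.

Lemma seq_inf_lb n : seq_inf <=V v n.
Proof.
have [infVf lim_sub lim_val lim_cases] := to_VfP hip lim_form_is_form lim_form_positive.
apply/form_leP => //; split.
- by move=> x /(v_dom n x) /lim_sub.
- move=> x /(v_dom n x) Dx; rewrite /qf lim_val //; apply: Re_le; exact: lim_form_le.
- rewrite /seq_inf; case: lim_cases => [[lim_b ->]|[_ ->]].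
    by left; exact (form_ext_bounded hip lim_form_is_form lim_form_positive lim_b).
  by right => x; exact: inD.
Qed.

Lemma seq_inf_glb s : Vf s -> (forall n, s <=V v n) -> s <=V seq_inf.
Proof.
move=> sVf s_lb; have [Dsv _ sb_or_sub] := form_le_elim sVf (vVf 0) (s_lb 0%N).
have s_le := lim_form_ge sVf s_lb.
have [infVf _ _ lim_cases] := to_VfP hip lim_form_is_form lim_form_positive.
case: lim_cases => [[lim_b lim_eq]|[_ lim_eq]]; rewrite /seq_inf lim_eq in infVf *;
  last by apply/form_leP.
apply/form_leP => //; have sb : bounded s.
  case: sb_or_sub => // sD; exact (bounded_form_le (Vf_positive sVf)
    lim_form_positive sD (fun x Dx => s_le x (sD x Dx)) lim_b).
have sfull := Vf_full sVf sb.
have lim_sesq := form_sesquilinear lim_form_is_form.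
have [M M0 boundM] := bounded_form_qf_le hip lim_sesq lim_form_positive lim_b.
have [Ms Ms0 boundMs] := bounded_form_qf_le hip (Vf_sesquilinear sVf) (Vf_positive sVf) sb.
have lim_dense : forall x d, 0 < d -> exists a, D a /\ qf ip (x - a) < d.
  by case: lim_form_is_form => _ Ddense _ _; exact: dense_sqnorm.
split => [x _|x _|]; [exact: sfull | | by left].
apply: (sesq_ext_dominates hip lim_sesq lim_form_positive M0 boundM lim_dense
  (Vf_sesquilinear sVf) (Vf_positive sVf) sfull Ms0) => // y.
by apply: boundMs.
Qed.

Lemma seq_inf_is_inf : is_inf_Vf ip v seq_inf.
Proof.
have [infVf _ _ _] := to_VfP hip lim_form_is_form lim_form_positive.
by split => //; [exact: seq_inf_lb | exact: seq_inf_glb].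
Qed.

End DecreasingLimit.

Section Tail.
Variables (R : realType) (H : lmodType R[i]) (ip : H -> H -> R[i]).
Hypothesis hip : is_inner_product ip.
Local Notation fm := (Defs.form H).
Local Notation Vf := (Vf ip).
Local Notation bounded := (bounded_form ip).
Local Notation "t <=V u" := (form_le ip t u) (at level 70).

Variable u : nat -> fm.
Hypotheses (uVf : forall n, Vf (u n)) (u_decr : forall n, u n.+1 <=V u n).

Lemma dom_eventually_constant :
  exists k, forall n x, dom (u (n + k)) x <-> dom (u k) x.
Proof.
have [[k ub]|unb] := pselect (exists k, bounded (u k)).
  have later_bounded n : bounded (u (n + k)).
    elim: n => // n IH; rewrite addSn.
    exact (form_le_bounded hip (uVf _) (uVf _) (u_decr _) IH).
  exists k => n x; have := Vf_full (uVf _) (later_bounded 0%N) x.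
  by have := Vf_full (uVf _) (later_bounded n) x; rewrite add0n.
exists 0%N => n x; rewrite addn0; elim: n => // n; apply: iff_trans.
apply: (form_le_unbounded_dom hip (uVf _) (uVf _) (u_decr n)) => ub.
by apply: unb; exists n.+1.
Qed.

Lemma is_inf_Vf_tail k t : is_inf_Vf ip (fun n => u (n + k)) t -> is_inf_Vf ip u t.
Proof.
case=> tVf t_lb t_glb; split => // [n|s sVf s_lb]; last by apply: t_glb => // n.
case: (leqP k n) => [kn|/ltnW nk]; first by have := t_lb (n - k)%N; rewrite subnK.
apply: (form_le_trans hip tVf (uVf k) (uVf n)); first by have := t_lb 0%N; rewrite add0n.
exact (form_le_nonincreasing hip uVf u_decr nk).
Qed.

End Tail.

Theorem theorem5p2 (R : realType) (H : lmodType R[i]) (ip : H -> H -> R[i]) :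
  is_inner_product ip -> hilbert_complete ip -> infinite_dimensional H ->
  monotone_downwards_sigma_complete ip.
Proof.
move=> hip _ _ u uVf u_decr.
have [k dom_k] := dom_eventually_constant hip uVf u_decr.
exists (seq_inf ip (fun n => u (n + k))); apply: (is_inf_Vf_tail hip uVf u_decr (k := k)).
apply: (seq_inf_is_inf hip) => [n|n|n x]; first exact: uVf.
  by rewrite addSn; exact: u_decr.
by rewrite add0n; exact: dom_k.
Qed.
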